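(* The system $\dot d_k=(1+\alpha d_k)(c_k^{(1)}-c_{k-1}^{(1)})$, $\dot c_k^{(j)}=c_k^{(j)}(d_{k+j}-d_k+\alpha c_{k+j}^{(1)}-\alpha c_{k-1}^{(1)})+(c_k^{(j+1)}-c_{k-1}^{(j+1)})$ ($1\le j\le m-1$), $\dot c_k^{(m)}=c_k^{(m)}(d_{k+m}-d_k+\alpha c_{k+m}^{(1)}-\alpha c_{k-1}^{(1)})$ is Hamiltonian with respect to the bracket $\{\cdot,\cdot\}_{2\alpha}$ with Hamilton function $H=\alpha^{-1}\sum_{k=1}^Nd_k+\sum_{k=1}^Nc_k^{(1)}$.
   Context: $N\ge2m+2$, $m\ge1$, $\alpha\neq0$ real, subscripts modulo $N$; phase space $\mathbb R^{(m+1)N}$ with coordinates $d_k,c_k^{(j)}$ ($1\le k\le N$, $1\le j\le m$); convention $c_k^{(p)}=0$ for $p>m$. The bracket $\{\cdot,\cdot\}_{2\alpha}$ is defined by: $\{d_k,d_l\}_{2\alpha}=0$; $\{d_k,c_k^{(j)}\}_{2\alpha}=-c_k^{(j)}(1+\alpha d_k)$, $\{c_k^{(j)},d_{k+j}\}_{2\alpha}=-c_k^{(j)}(1+\alpha d_{k+j})$; $\{c_k^{(i)},c_{k+i}^{(j)}\}_{2\alpha}=-c_k^{(i+j)}-\alpha c_k^{(i)}c_{k+i}^{(j)}$; for $i\le j$, $1\le\ell\le i-1$: $\{c_k^{(i)},c_{k+\ell}^{(j)}\}_{2\alpha}=-\alpha c_k^{(i)}c_{k+\ell}^{(j)}+\alpha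 c_k^{(j+\ell)}c_{k+\ell}^{(i-\ell)}$; for $i\le j$, $j-i+1\le\ell\le j-1$: $\{c_k^{(j)},c_{k+\ell}^{(i)}\}_{2\alpha}=-\alpha c_k^{(j)}c_{k+\ell}^{(i)}+\alpha c_k^{(i+\ell)}c_{k+\ell}^{(j-\ell)}$; all other coordinate brackets (up to antisymmetry) are zero. Hamiltonian system: $\dot x=\{H,x\}$ for each coordinate $x$. *)

From HB Require Import structures.
From mathcomp Require Import all_boot all_algebra.
From mathcomp Require Import all_classical all_reals all_analysis.
Set Implicit Arguments. Unset Strict Implicit. Unset Printing Implicit Defensive.
Import GRing.Theory Num.Theory.
Local Open Scope ring_scope.

(* Coordinates: inl k  ~ d_k,   inr (k, j) ~ c_k^{(j)}.
   The canonical coordinates are k < N and 1 <= j <= m (see [coords]);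
   all accessors reduce the lattice index k modulo N. *)
Definition Coord : Type := (nat + (nat * nat))%type.
Definition phase (R : realType) := Coord -> R.

Section Defs.
Variables (R : realType) (N m : nat) (alpha : R).

Definition dd (p : phase R) (k : nat) : R := p (inl (k %% N)%N).
(* c_k^{(j)}, indices modulo N, with the convention c^{(p)} = 0 for p > m
   (and also for p = 0, which never occurs) *)
Definition cc (p : phase R) (k j : nat) : R :=
  if (1 <= j <= m)%N then p (inr ((k %% N)%N, j)) else 0.

(* "forward" value of {c_k^{(a)}, c_l^{(b)}}_{2alpha}, where l = k + s mod N *)
Definition fwd_cc (p : phase R) (k a l b : nat) : R :=
  let s := (((l %% N) + N - (k %% N)) %% N)%N in
  (if s == a then - cc p k (a + b) - alpha * cc p k a * cc p l b else 0)
  + (if [|| ((a <= b)%N && (1 <= s <= a - 1)%N)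
          | ((b <= a)%N && (a - b + 1 <= s <= a - 1)%N)]
     then - alpha * cc p k a * cc p l b + alpha * cc p k (b + s) * cc p l (a - s)
     else 0).

Definition br_dc (p : phase R) (k l j : nat) : R :=
  (if (k %% N == l %% N)%N then - cc p l j * (1 + alpha * dd p k) else 0)
  + (if (k %% N == (l + j) %% N)%N then cc p l j * (1 + alpha * dd p k) else 0).

Definition br (a b : Coord) (p : phase R) : R :=
  match a, b with
  | inl _, inl _ => 0
  | inl k, inr (l, j) => br_dc p k l j
  | inr (l, j), inl k => - br_dc p k l j
  | inr (k, i), inr (l, j) => fwd_cc p k i l j - fwd_cc p l j k i
  end.

Definition coords : seq Coord :=
  [seq inl k | k <- iota 0 N] ++
  [seq inr (k, j) | k <- iota 0 N, j <- iota 1 m].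

Definition coordfun (x : Coord) : phase R -> R := fun p => p x.

Definition partial (a : Coord) (F : phase R -> R) (p : phase R) : R :=
  derive1 (fun t : R => F (fun b => p b + (if b == a then t else 0))) 0.

Definition pbr (F G : phase R -> R) (p : phase R) : R :=
  \sum_(a <- coords) \sum_(b <- coords)
     partial a F p * partial b G p * br a b p.

Definition Ham (p : phase R) : R :=
  alpha^-1 * (\sum_(1 <= k < N.+1) dd p k) + \sum_(1 <= k < N.+1) cc p k 1.

Definition rhs (x : Coord) (p : phase R) : R :=
  match x with
  | inl k => (1 + alpha * dd p k) * (cc p k 1 - cc p (k + N - 1) 1)
  | inr (k, j) =>
      if (j <= m - 1)%N then
        cc p k j * (dd p (k + j) - dd p k + alpha * cc p (k + j) 1
                    - alpha * cc p (k + N - 1) 1)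
        + (cc p k j.+1 - cc p (k + N - 1) j.+1)
      else
        cc p k m * (dd p (k + m) - dd p k + alpha * cc p (k + m) 1
                    - alpha * cc p (k + N - 1) 1)
  end.

End Defs.

From mathcomp Require Import all_boot all_algebra.
From mathcomp Require Import all_classical all_reals all_analysis.
From mathcomp Require Import zify ring lra.
Set Implicit Arguments. Unset Strict Implicit. Unset Printing Implicit Defensive.
Import GRing.Theory Num.Theory.
Local Open Scope ring_scope.

(* H is linear, so its partial derivatives are constant: 1/alpha along each
   d_k, 1 along each c_k^(1) and 0 otherwise.  Hence
   {H, x} = alpha^-1 sum_k {d_k, x} + sum_k {c_k^(1), x}, and for a coordinate
   x only the two or four terms whose lattice indices are adjacent to that of x
   are nonzero; adding them up gives the right-hand side of the system. *)

Lemma sum_seq_single (V : nmodType) (I : eqType) (r : seq I) (x : I) (F : I -> V) :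
  uniq r -> x \in r -> (forall i, i \in r -> i != x -> F i = 0) ->
  \sum_(i <- r) F i = F x.
Proof.
move=> r_uniq xr F0; rewrite (bigD1_seq x) //= big1_seq ?addr0 // => i /andP[ix ir].
exact: F0.
Qed.

Lemma sum_iota_single (V : nmodType) (N x : nat) (F : nat -> V) : (x < N)%N ->
  (forall i, (i < N)%N -> i != x -> F i = 0) -> \sum_(i <- iota 0 N) F i = F x.
Proof.
move=> x_lt F0; apply: sum_seq_single; rewrite ?iota_uniq ?mem_iota // => i.
by rewrite mem_iota; exact: F0.
Qed.

Lemma sum_index_iota_modn (V : nmodType) (N : nat) (F : nat -> V) : (0 < N)%N ->
  \sum_(1 <= k < N.+1) F (k %% N)%N = \sum_(k <- iota 0 N) F k.
Proof.
case: N => // n _; rewrite big_nat_recr //= modnn big_cons addrC; congr (_ + _).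
rewrite /index_iota subn1; apply: eq_big_seq => k.
by rewrite mem_iota => /andP[_ k_lt]; rewrite modn_small //; lia.
Qed.

Lemma modn_lt_double (N x : nat) : (x < N + N)%N ->
  (x %% N = if x < N then x else x - N)%N.
Proof.
move=> x_lt; case: ltnP => [/modn_small //|N_le].
by rewrite -{1}(subnK N_le) modnDr modn_small //; lia.
Qed.

Lemma subn_modn_eq (N k l j : nat) : (0 < j < N)%N -> (k < N)%N -> (l < N)%N ->
  ((k + N - l) %% N == j)%N = (k == (l + j) %% N)%N.
Proof.
move=> j_range k_lt l_lt.
rewrite (@modn_lt_double N (k + N - l)) ?(@modn_lt_double N (l + j)); try lia.
by do 2 case: ifP => ?; apply/eqP/eqP; lia.
Qed.

Lemma modn_predn_eq (N k l : nat) : (1 < N)%N -> (k < N)%N -> (l < N)%N ->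
  (k == (l + N - 1) %% N)%N = (l == (k + 1) %% N)%N.
Proof.
move=> N_gt1 k_lt l_lt.
rewrite (@modn_lt_double N (l + N - 1)) ?(@modn_lt_double N (k + 1)); try lia.
by do 2 case: ifP => ?; apply/eqP/eqP; lia.
Qed.

Section HamiltonianStructure.
Variables (R : realType) (N m : nat) (alpha : R).

Definition unitv (a : Coord) : phase R := fun b => if b == a then 1 else 0.

Lemma partial_affine a (F : phase R -> R) p c :
  (forall t, F (fun b => p b + (if b == a then t else 0)) = F p + t * c) ->
  partial a F p = c.
Proof.
move=> F_affine; rewrite /partial (_ : (fun t => _) = (fun t => F p + t * c)).
  by rewrite derive1E derive_val scaler0 !add0r mul1r; exact: mulr1.
by apply: funext => t; rewrite F_affine.
Qed.

Lemma partial_coordfun a x p : partial a (coordfun x) p = unitv a x.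
Proof.
by apply: partial_affine => t; rewrite /coordfun /unitv; case: eqP; rewrite ?mulr1 ?mulr0.
Qed.

Lemma uniq_coords : uniq (coords N m).
Proof.
rewrite cat_uniq map_inj_uniq ?iota_uniq; last by move=> a b [].
rewrite allpairs_uniq ?iota_uniq ?andbT //; last by move=> [a1 a2] [b1 b2] _ _ [-> ->].
by apply/hasP => -[y /allpairsP[[k j] [_ _ ->]] /mapP[]].
Qed.

Lemma pbr_coordfun (F : phase R -> R) x p : x \in coords N m ->
  pbr N m alpha F (coordfun x) p = \sum_(a <- coords N m) partial a F p * br N m alpha a x p.
Proof.
move=> xC; apply: eq_bigr => a _; rewrite (sum_seq_single uniq_coords xC).
  by rewrite partial_coordfun /unitv eqxx mulr1.
by move=> b _ /negbTE b_neq; rewrite partial_coordfun /unitv eq_sym b_neq mulr0 mul0r.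
Qed.

Lemma Ham_add p q :
  Ham N m alpha (fun b => p b + q b) = Ham N m alpha p + Ham N m alpha q.
Proof.
rewrite /Ham /dd /cc; case: (1 <= 1 <= m)%N; rewrite !big_split mulrDr addrACA //.
by rewrite !big1_eq !addr0.
Qed.

Lemma Ham_scale t q : Ham N m alpha (fun b => t * q b) = t * Ham N m alpha q.
Proof.
rewrite /Ham /dd /cc mulrDr mulrCA; case: (1 <= 1 <= m)%N; rewrite -!mulr_sumr //.
by rewrite big1_eq mulr0.
Qed.

Lemma partial_Ham a p : partial a (Ham N m alpha) p = Ham N m alpha (unitv a).
Proof.
apply: partial_affine => t; rewrite -Ham_scale -Ham_add; congr Ham.
by apply: funext => b; rewrite /unitv; case: eqP; rewrite ?mulr1 ?mulr0.
Qed.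

Hypotheses (m_gt0 : (0 < m)%N) (m_ltN : (m < N)%N).

Lemma Ham_unitv_d k : (k < N)%N -> Ham N m alpha (unitv (inl k)) = alpha^-1.
Proof.
move=> k_lt; rewrite /Ham /dd /cc m_gt0 /= [X in _ + X]big1 ?addr0 //.
rewrite (sum_index_iota_modn (fun i => unitv (inl k) (inl i))); last lia.
rewrite (@sum_iota_single _ _ k) /unitv ?eqxx ?mulr1 // => i _ /negbTE ik.
by rewrite inj_eq ?ik //; exact: inl_inj.
Qed.

Lemma Ham_unitv_c k j : (k < N)%N ->
  Ham N m alpha (unitv (inr (k, j))) = if j == 1%N then 1 else 0.
Proof.
move=> k_lt; rewrite /Ham /dd /cc m_gt0 /= big1 ?mulr0 ?add0r //.
rewrite (sum_index_iota_modn (fun i => unitv (inr (k, j)) (inr (i, 1%N)))); last lia.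
case: eqP => [->|j_neq1].
  rewrite (@sum_iota_single _ _ k) /unitv ?eqxx // => i _ /negbTE ik.
  by rewrite !inj_eq ?xpair_eqE ?ik //; exact: inr_inj.
by rewrite big1 // => i _; rewrite /unitv; case: eqP => // -[_ /esym].
Qed.

Lemma pbr_Ham_coordfun x p : x \in coords N m ->
  pbr N m alpha (Ham N m alpha) (coordfun x) p =
  alpha^-1 * \sum_(k <- iota 0 N) br N m alpha (inl k) x p
  + \sum_(k <- iota 0 N) br N m alpha (inr (k, 1%N)) x p.
Proof.
move=> xC; rewrite pbr_coordfun // /coords big_cat big_map big_allpairs_dep /=.
rewrite mulr_sumr; congr (_ + _); apply: eq_big_seq => k; rewrite mem_iota => /andP[_ k_lt].
  by rewrite partial_Ham Ham_unitv_d.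
rewrite (sum_seq_single (x := 1%N)) ?iota_uniq ?mem_iota ?m_gt0 //.
  by rewrite partial_Ham Ham_unitv_c // eqxx mul1r.
by move=> j _ /negbTE j_neq1; rewrite partial_Ham Ham_unitv_c // j_neq1 mul0r.
Qed.

Lemma dd_modn (p : phase R) k : dd N p (k %% N)%N = dd N p k.
Proof. by rewrite /dd modn_mod. Qed.

Lemma cc_modn (p : phase R) k j : cc N m p (k %% N)%N j = cc N m p k j.
Proof. by rewrite /cc modn_mod. Qed.

(* When one of the two orders is 1, the second clause of [fwd_cc] has an empty
   range, so only the adjacency clause survives. *)
Lemma fwd_cc_order1l (p : phase R) k l j : (k < N)%N -> (l < N)%N ->
  fwd_cc N m alpha p k 1 l j =
  if k == ((l + N - 1) %% N)%N then - cc N m p k j.+1 - alpha * cc N m p k 1 * cc N m p l j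
  else 0.
Proof.
move=> k_lt l_lt; rewrite /fwd_cc (modn_small k_lt) (modn_small l_lt) subn_modn_eq //; last lia.
rewrite -modn_predn_eq //; last lia.
by rewrite [X in _ + X]ifF ?addr0 ?add1n //; apply/negP; lia.
Qed.

Lemma fwd_cc_order1r (p : phase R) k l j : (0 < j < N)%N -> (k < N)%N -> (l < N)%N ->
  fwd_cc N m alpha p l j k 1 =
  if k == ((l + j) %% N)%N then - cc N m p l j.+1 - alpha * cc N m p l j * cc N m p k 1
  else 0.
Proof.
move=> j_range k_lt l_lt.
rewrite /fwd_cc (modn_small k_lt) (modn_small l_lt) subn_modn_eq //.
by rewrite [X in _ + X]ifF ?addr0 ?addn1 //; apply/negP; lia.
Qed.

Lemma pbr_Ham_d k p : (k < N)%N ->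
  pbr N m alpha (Ham N m alpha) (coordfun (inl k)) p = rhs N m alpha (inl k) p.
Proof.
move=> k_lt; have N_gt1 : (1 < N)%N by lia.
have N_gt0 : (0 < N)%N by lia.
have kC : inl k \in coords N m by rewrite mem_cat map_f ?mem_iota.
rewrite pbr_Ham_coordfun // big1 ?mulr0 ?add0r // sumrN /br_dc big_split /=.
rewrite (modn_small k_lt) (@sum_iota_single _ _ k) // => [|i i_lt /negbTE ik]; last first.
  by rewrite modn_small // eq_sym ik.
rewrite (@sum_iota_single _ _ ((k + N - 1) %% N)) ?ltn_pmod // => [|i i_lt /negbTE ik]; last first.
  by rewrite -modn_predn_eq // ik.
by rewrite (modn_small k_lt) eqxx -modn_predn_eq ?ltn_pmod // eqxx cc_modn /rhs; ring.
Qed.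

Hypothesis alpha_neq0 : alpha != 0.

Lemma pbr_Ham_c k j p : (k < N)%N -> (0 < j <= m)%N ->
  pbr N m alpha (Ham N m alpha) (coordfun (inr (k, j))) p = rhs N m alpha (inr (k, j)) p.
Proof.
move=> k_lt j_range; have N_gt0 : (0 < N)%N by lia.
have j_lt : (0 < j < N)%N by lia.
have kjC : inr (k, j) \in coords N m.
  rewrite mem_cat; apply/orP; right; apply/allpairsP; exists (k, j).
  by rewrite !mem_iota; split => //; lia.
rewrite pbr_Ham_coordfun //= /br_dc big_split sumrB /=.
rewrite (modn_small k_lt) (@sum_iota_single _ _ k) => [|//|i i_lt /negbTE ik]; last first.
  by rewrite modn_small // ik.
rewrite (@sum_iota_single _ _ ((k + j) %% N)) ?ltn_pmod // => [|i i_lt /negbTE ik]; last first.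
  by rewrite modn_small // ik.
rewrite (@sum_iota_single _ _ ((k + N - 1) %% N)) ?ltn_pmod // => [|i i_lt /negbTE ik]; last first.
  by rewrite fwd_cc_order1l // ik.
rewrite (@sum_iota_single _ _ ((k + j) %% N)) ?ltn_pmod // => [|i i_lt /negbTE ik]; last first.
  by rewrite fwd_cc_order1r // ik.
rewrite fwd_cc_order1l ?fwd_cc_order1r ?ltn_pmod // !eqxx modn_mod eqxx (modn_small k_lt) eqxx.
rewrite !dd_modn !cc_modn /rhs.
case: ifP => [_|j_ge]; first by field.
have -> : j = m by lia.
have cc_over a : cc N m p a m.+1 = 0 by rewrite /cc ltnn andbF.
by rewrite !cc_over; field.
Qed.

End HamiltonianStructure.

Theorem mainTheorem17 (R : realType) (N m : nat) (alpha : R) :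
  (1 <= m)%N -> (2 * m + 2 <= N)%N -> alpha != 0 ->
  forall (x : Coord), x \in coords N m ->
  forall (p : phase R),
    rhs N m alpha x p = pbr N m alpha (Ham N m alpha) (coordfun x) p.
Proof.
move=> m_gt0 N_ge alpha_neq0 x xC p; have m_ltN : (m < N)%N by lia.
move: xC; rewrite mem_cat => /orP[/mapP[k] | /allpairsP[[k j] []]].
- by rewrite mem_iota => /andP[_ k_lt] ->; rewrite pbr_Ham_d.
- rewrite !mem_iota /= => k_lt j_range ->; rewrite pbr_Ham_c //; lia.
Qed.
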